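(* Let $M=\{0\}\cup\{2^{-n}:n\in\mathbb{N}\}\subseteq\mathbb{R}$ and $K=M\times[0,1]\subseteq\mathbb{R}^2$. Then $C^1(K)\neq C^1(\mathbb{R}^2|K)$, i.e. there is $f\in C^1(K)$ which is not the restriction to $K$ of any $C^1$ function on $\mathbb{R}^2$.
   Context: $C^1(K)$ is the set of $f:K\to\mathbb{R}$ admitting a continuous $df:K\to\mathbb{R}^2$ with $\lim_{y\to x,\,y\in K\setminus\{x\}}\frac{f(y)-f(x)-\langle df(x),y-x\rangle}{|y-x|}=0$ for all $x\in K$. $C^1(\mathbb{R}^2|K)=\{g|_K: g\in C^1(\mathbb{R}^2)\}$. *)

From Stdlib Require Import Reals Lra.
Open Scope R_scope.

Definition pt := (R * R)%type.

Definition norm2 (v : pt) : R := sqrt (fst v * fst v + snd v * snd v).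
Definition vsub (a b : pt) : pt := (fst a - fst b, snd a - snd b).
Definition dist2 (a b : pt) : R := norm2 (vsub a b).
Definition inner (a b : pt) : R := fst a * fst b + snd a * snd b.

Definition C1_on (K : pt -> Prop) (f : pt -> R) : Prop :=
  exists df : pt -> pt,
    (forall x, K x -> forall eps, eps > 0 -> exists delta, delta > 0 /\
       forall y, K y -> dist2 y x < delta -> dist2 (df y) (df x) < eps) /\
    (forall x, K x -> forall eps, eps > 0 -> exists delta, delta > 0 /\
       forall y, K y -> y <> x -> dist2 y x < delta ->
         Rabs ((f y - f x - inner (df x) (vsub y x)) / dist2 y x) < eps).

(* C^1(R^2): the same notion with K = R^2, i.e. Frechet differentiable
   with continuous derivative. *)
Definition C1_R2 (g : pt -> R) : Prop := C1_on (fun _ => True) g.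

Definition M (t : R) : Prop := t = 0 \/ exists n : nat, t = / (2 ^ n).

Definition Kset (p : pt) : Prop := M (fst p) /\ 0 <= snd p <= 1.

From Stdlib Require Import Reals Lra Psatz.
From Coquelicot Require Import Coquelicot.
Open Scope R_scope.

(* The witness is f(x, y) = x^2 y^2 / (x^2 + y^4) with derivative (0, d f / d y) on K:
   the columns {2^-n} x [0, 1] of K are isolated, so only vertical increments occur
   there, and along the axis x = 0 one has f <= min (y^2, x^2 / y^2),
   which makes f(x, y) = o(|(x, y) - (0, y0)|).  Continuity of this derivative at the
   axis comes from |d f / d y|^2 <= 2 |x|.
   A C^1 extension g cannot exist: g vanishes at the points (2^-n, 0), so
   d g / d x (0, 0) = 0, whereas on the row y = s = 2^-k one has g(s^2/2, s) = s^2/5 and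
   g(s^2, s) = s^2/2, so by the mean value theorem d g / d x = 3/5 at some point of
   that row with 0 < x <= s^2, i.e. arbitrarily close to the origin. *)

Lemma Rabs_sqr a : Rabs a * Rabs a = a * a.
Proof. rewrite <- Rabs_mult. apply Rabs_pos_eq. nra. Qed.

Lemma norm2_vertical a : norm2 (0, a) = Rabs a.
Proof. unfold norm2; simpl. rewrite <- sqrt_Rsqr_abs. f_equal. unfold Rsqr; ring. Qed.

Lemma norm2_horizontal a : norm2 (a, 0) = Rabs a.
Proof. unfold norm2; simpl. rewrite <- sqrt_Rsqr_abs. f_equal. unfold Rsqr; ring. Qed.

Lemma Rabs_fst_le_norm2 v : Rabs (fst v) <= norm2 v.
Proof. unfold norm2. rewrite <- sqrt_Rsqr_abs. apply sqrt_le_1_alt. unfold Rsqr; nra. Qed.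

Lemma Rabs_snd_le_norm2 v : Rabs (snd v) <= norm2 v.
Proof. unfold norm2. rewrite <- sqrt_Rsqr_abs. apply sqrt_le_1_alt. unfold Rsqr; nra. Qed.

Lemma norm2_le_Rabs_add v : norm2 v <= Rabs (fst v) + Rabs (snd v).
Proof.
  pose proof (Rabs_pos (fst v)). pose proof (Rabs_pos (snd v)).
  unfold norm2. rewrite <- (sqrt_Rsqr (Rabs (fst v) + Rabs (snd v))) by lra.
  apply sqrt_le_1_alt. unfold Rsqr.
  rewrite <- (Rabs_sqr (fst v)), <- (Rabs_sqr (snd v)). nra.
Qed.

Lemma Rabs_fst_le_dist2 a b : Rabs (fst a - fst b) <= dist2 a b.
Proof. apply (Rabs_fst_le_norm2 (vsub a b)). Qed.

Lemma Rabs_snd_le_dist2 a b : Rabs (snd a - snd b) <= dist2 a b.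
Proof. apply (Rabs_snd_le_norm2 (vsub a b)). Qed.

Lemma dist2_le_Rabs_add a b : dist2 a b <= Rabs (fst a - fst b) + Rabs (snd a - snd b).
Proof. apply (norm2_le_Rabs_add (vsub a b)). Qed.

Lemma dist2_pos a b : a <> b -> 0 < dist2 a b.
Proof.
  intros Hab. unfold dist2, norm2, vsub; simpl. apply sqrt_lt_R0.
  destruct a as [a1 a2], b as [b1 b2]; simpl.
  destruct (Req_dec a1 b1), (Req_dec a2 b2); subst; try congruence; nra.
Qed.

Lemma dist2_vertical x y y0 : dist2 (x, y) (x, y0) = Rabs (y - y0).
Proof. unfold dist2, vsub; simpl. rewrite Rminus_diag. apply norm2_vertical. Qed.

Lemma dist2_horizontal x x0 y : dist2 (x, y) (x0, y) = Rabs (x - x0).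
Proof. unfold dist2, vsub; simpl. rewrite Rminus_diag. apply norm2_horizontal. Qed.

Lemma inv_pow2_pos n : 0 < / 2 ^ n.
Proof. apply Rinv_0_lt_compat, pow_lt; lra. Qed.

Lemma inv_pow2_le_1 n : / 2 ^ n <= 1.
Proof.
  rewrite <- Rinv_1. apply Rinv_le_contravar; [lra |]. apply pow_R1_Rle. lra.
Qed.

Lemma inv_pow2_lt e : 0 < e -> exists n, / 2 ^ n < e.
Proof.
  intros He. destruct (pow_lt_1_zero (/ 2) ltac:(rewrite Rabs_right; lra) e He) as [n Hn].
  exists n. specialize (Hn n (le_n _)).
  rewrite pow_inv, Rabs_right in Hn; auto. left; apply inv_pow2_pos.
Qed.

Lemma inv_pow2_lt_half m n : (m < n)%nat -> / 2 ^ n <= / 2 ^ m / 2.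
Proof.
  intros Hmn. pose proof (pow_lt 2 m ltac:(lra)).
  assert (Hpow : 2 * 2 ^ m <= 2 ^ n) by (apply (Rle_pow 2 (S m) n); lra || lia).
  unfold Rdiv. rewrite <- Rinv_mult. apply Rinv_le_contravar; lra.
Qed.

Lemma M_inv_pow2 n : M (/ 2 ^ n).
Proof. right. exists n. reflexivity. Qed.

Lemma M_isolated_inv_pow2 x n : M x -> Rabs (x - / 2 ^ n) < / 2 ^ n / 2 -> x = / 2 ^ n.
Proof.
  pose proof (inv_pow2_pos n).
  intros [-> | [m ->]] Hx.
  - rewrite Rabs_minus_sym, Rminus_0_r, Rabs_right in Hx; lra.
  - pose proof (inv_pow2_pos m).
    destruct (Nat.lt_total m n) as [Hmn | [-> | Hnm]]; auto; exfalso.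
    + pose proof (inv_pow2_lt_half m n Hmn). rewrite Rabs_right in Hx; lra.
    + pose proof (inv_pow2_lt_half n m Hnm). rewrite Rabs_left1 in Hx; lra.
Qed.

Lemma Kset_inv_pow2 n y : 0 <= y <= 1 -> Kset (/ 2 ^ n, y).
Proof. intros Hy. split; [apply M_inv_pow2 | exact Hy]. Qed.

Lemma Kset_near_column n p y0 :
  Kset p -> dist2 p (/ 2 ^ n, y0) < / 2 ^ n / 2 -> p = (/ 2 ^ n, snd p).
Proof.
  destruct p as [x y]. intros [Mx _] Hd. f_equal.
  apply M_isolated_inv_pow2; [exact Mx |].
  pose proof (Rabs_fst_le_dist2 (x, y) (/ 2 ^ n, y0)). simpl in *. lra.
Qed.

Lemma derivable_pt_lim_remainder h y0 l :
  derivable_pt_lim h y0 l -> forall eps, eps > 0 -> exists delta, delta > 0 /\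
    forall y, y <> y0 -> Rabs (y - y0) < delta ->
      Rabs ((h y - h y0 - l * (y - y0)) / Rabs (y - y0)) < eps.
Proof.
  intros Hl eps Heps. destruct (Hl eps Heps) as [delta Hdelta].
  exists delta. split; [apply cond_pos |]. intros y Hy Hyd.
  assert (Hy0 : y - y0 <> 0) by lra.
  specialize (Hdelta (y - y0) Hy0 Hyd). replace (y0 + (y - y0)) with y in Hdelta by ring.
  unfold Rdiv in *. rewrite Rabs_mult, Rabs_inv, Rabs_Rabsolu, <- Rabs_inv, <- Rabs_mult.
  replace ((h y - h y0 - l * (y - y0)) * / (y - y0)) with ((h y - h y0) * / (y - y0) - l)
    by (field; exact Hy0).
  exact Hdelta.
Qed.

Lemma derivable_pt_lim_0_inv_pow2 h l :
  derivable_pt_lim h 0 l -> (forall n, h (/ 2 ^ n) = h 0) -> l = 0.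
Proof.
  intros Hl Hh. destruct (Req_dec l 0) as [| Hl0]; auto; exfalso.
  destruct (Hl (Rabs l) (Rabs_pos_lt l Hl0)) as [delta Hdelta].
  destruct (inv_pow2_lt delta (cond_pos delta)) as [n Hn].
  pose proof (inv_pow2_pos n).
  specialize (Hdelta (/ 2 ^ n) ltac:(lra) ltac:(rewrite Rabs_right; lra)).
  rewrite Rplus_0_l, Hh, Rminus_diag in Hdelta. unfold Rdiv in Hdelta.
  rewrite Rmult_0_l, Rminus_0_l, Rabs_Ropp in Hdelta. lra.
Qed.

Definition cont_at (K : pt -> Prop) (F : pt -> pt) (x : pt) : Prop :=
  forall eps, eps > 0 -> exists delta, delta > 0 /\
    forall y, K y -> dist2 y x < delta -> dist2 (F y) (F x) < eps.

Definition whitney_at (K : pt -> Prop) (f : pt -> R) (df : pt -> pt) (x : pt) : Prop :=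
  forall eps, eps > 0 -> exists delta, delta > 0 /\
    forall y, K y -> y <> x -> dist2 y x < delta ->
      Rabs ((f y - f x - inner (df x) (vsub y x)) / dist2 y x) < eps.

Lemma C1_on_intro K f df :
  (forall x, K x -> cont_at K df x) -> (forall x, K x -> whitney_at K f df x) -> C1_on K f.
Proof. intros Hc Hw. exists df. split; assumption. Qed.

Lemma C1_R2_partial_fst g dg :
  (forall x, whitney_at (fun _ => True) g dg x) ->
  forall x s, derivable_pt_lim (fun x => g (x, s)) x (fst (dg (x, s))).
Proof.
  intros Hw x s eps Heps. destruct (Hw (x, s) eps Heps) as [delta [Hdelta Hrem]].
  exists (mkposreal delta Hdelta). intros h Hh Hhd; simpl in Hhd.
  assert (Hne : (x + h, s) <> (x, s)) by (intros E; injection E; lra).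
  specialize (Hrem (x + h, s) I Hne). rewrite dist2_horizontal in Hrem.
  replace (x + h - x) with h in Hrem by ring.
  unfold inner, vsub in Hrem; simpl in Hrem. unfold Rdiv in Hrem.
  rewrite Rabs_mult, Rabs_inv, Rabs_Rabsolu, <- Rabs_inv, <- Rabs_mult in Hrem.
  replace ((g (x + h, s) - g (x, s)) / h - fst (dg (x, s)))
    with ((g (x + h, s) - g (x, s) - (fst (dg (x, s)) * (x + h - x) + snd (dg (x, s)) * (s - s))) * / h)
    by (field; exact Hh).
  apply Hrem. lra.
Qed.

Definition phi (x y : R) : R := x * x * (y * y) / (x * x + y * y * y * y).

Definition phi_dy (x y : R) : R :=
  2 * (x * x) * y * (x * x - y * y * y * y) / ((x * x + y * y * y * y) * (x * x + y * y * y * y)).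

Lemma phi_0l y : phi 0 y = 0.
Proof. unfold phi, Rdiv. ring. Qed.

Lemma phi_0r x : phi x 0 = 0.
Proof. unfold phi, Rdiv. ring. Qed.

Lemma phi_dy_0l y : phi_dy 0 y = 0.
Proof. unfold phi_dy, Rdiv. ring. Qed.

Lemma phi_nonneg x y : 0 <= phi x y.
Proof.
  destruct (Req_dec x 0) as [-> | Hx]; [rewrite phi_0l; lra |].
  apply Rle_mult_inv_pos; nra.
Qed.

Lemma phi_le_sqr_snd x y : phi x y <= y * y.
Proof.
  destruct (Req_dec x 0) as [-> | Hx]; [rewrite phi_0l; nra |].
  unfold phi. apply Rle_div_l; nra.
Qed.

Lemma phi_mul_sqr_snd_le x y : phi x y * (y * y) <= x * x.
Proof.
  destruct (Req_dec x 0) as [-> | Hx]; [rewrite phi_0l; nra |].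
  unfold phi. unfold Rdiv. rewrite Rmult_assoc, (Rmult_comm (/ _)), <- Rmult_assoc.
  apply Rle_div_l; nra.
Qed.

Lemma phi_small_near_axis y0 eps : eps > 0 -> exists delta, delta > 0 /\
  forall x y d, 0 < d -> d < delta -> Rabs x <= d -> Rabs (y - y0) <= d -> phi x y < eps * d.
Proof.
  intros Heps. destruct (Req_dec y0 0) as [-> | Hy0].
  -     exists eps. split; [lra |]. intros x y d Hd Hdelta _ Hy.
    rewrite Rminus_0_r in Hy.
    pose proof (phi_le_sqr_snd x y) as Hphi. rewrite <- Rabs_sqr in Hphi.
    pose proof (Rabs_pos y). nra.
  -     set (c := Rabs y0 / 2).
    assert (Hc : 0 < c) by (pose proof (Rabs_pos_lt y0 Hy0); unfold c; lra).
    assert (Hec : 0 < eps * (c * c)) by (apply Rmult_lt_0_compat; nra).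
    exists (Rmin c (eps * (c * c))). split; [apply Rmin_pos; lra |].
    intros x y d Hd Hdelta Hx Hy.
    pose proof (Rmin_l c (eps * (c * c))). pose proof (Rmin_r c (eps * (c * c))).
    assert (Hyc : c < Rabs y).
    { pose proof (Rabs_triang_inv y0 (y0 - y)) as Htri.
      replace (y0 - (y0 - y)) with y in Htri by ring.
      rewrite Rabs_minus_sym in Hy. unfold c in *. lra. }
    pose proof (phi_mul_sqr_snd_le x y) as Hphi. pose proof (phi_nonneg x y).
    rewrite <- (Rabs_sqr x), <- (Rabs_sqr y) in Hphi.
    pose proof (Rabs_pos x).
    assert (c * c < Rabs y * Rabs y) by nra.
    assert (Rabs x * Rabs x <= Rabs x * d) by nra.
    assert (Rabs x * d < eps * (c * c) * d) by nra.
    nra.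
Qed.

(* [x^2 + y^4] dominates both [x^2] and [2 |x| y^2], so the product of the two bounds
   [|phi_dy x y| <= 2 |y|] and [|phi_dy x y| <= |x| / |y|] gives [2 |x|]. *)
Lemma phi_dy_sqr_le x y : phi_dy x y * phi_dy x y <= 2 * Rabs x.
Proof.
  destruct (Req_dec x 0) as [-> | Hx]; [rewrite phi_dy_0l; pose proof (Rabs_pos 0); nra |].
  set (S := x * x + y * y * y * y).
  assert (HS : 0 < S) by (unfold S; nra).
  assert (Hdiff : (x * x - y * y * y * y) * (x * x - y * y * y * y) <= S * S) by (unfold S; nra).
  assert (Hamgm : 2 * Rabs x * (y * y) <= S).
  { unfold S. rewrite <- (Rabs_sqr x).
    pose proof (Rle_0_sqr (Rabs x - y * y)). unfold Rsqr in *. nra. }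
  assert (Hxx : Rabs x * Rabs x <= S) by (unfold S; rewrite Rabs_sqr; nra).
  replace (phi_dy x y * phi_dy x y)
    with (4 * (Rabs x * Rabs x) * (Rabs x * Rabs x) * (y * y)
          * ((x * x - y * y * y * y) * (x * x - y * y * y * y)) / (S * S * (S * S)))
    by (unfold phi_dy, S; rewrite !Rabs_sqr; field; unfold S in HS; lra).
  assert (HS4 : 0 < S * S * (S * S)) by (apply Rmult_lt_0_compat; nra).
  apply Rle_div_l; [lra |].
  pose proof (Rabs_pos x).
  assert (Hy2 : 0 <= y * y) by nra.
  assert (0 <= 2 * Rabs x * (y * y)) by (apply Rmult_le_pos; lra).
  assert (0 <= Rabs x * Rabs x) by (apply Rmult_le_pos; lra).
  assert (Hprod : 2 * Rabs x * (y * y) * (Rabs x * Rabs x) <= S * S)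
    by (apply Rmult_le_compat; assumption).
  assert (Hprod2 : 2 * Rabs x * (y * y) * (Rabs x * Rabs x)
               * ((x * x - y * y * y * y) * (x * x - y * y * y * y)) <= S * S * (S * S))
    by (apply Rmult_le_compat; try assumption;
        [apply Rmult_le_pos; assumption | apply Rle_0_sqr]).
  nra.
Qed.

Lemma phi_dy_lim x y : x <> 0 -> derivable_pt_lim (phi x) y (phi_dy x y).
Proof.
  intros Hx. apply is_derive_Reals. unfold phi, phi_dy.
  assert (0 < x * x + y * y * y * y) by nra.
  auto_derive; [lra | field; lra].
Qed.

Lemma phi_dy_continuous x y : x <> 0 -> continuity_pt (phi_dy x) y.
Proof.
  intros Hx. apply continuity_pt_filterlim, (ex_derive_continuous (phi_dy x)).
  assert (0 < x * x + y * y * y * y) by nra.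
  unfold phi_dy. auto_derive. nra.
Qed.

Lemma phi_sqr_diag s : s <> 0 -> phi (s * s) s = s * s / 2.
Proof.
  intros Hs. assert (0 < s * s) by nra. unfold phi. field. nra.
Qed.

Lemma phi_half_sqr_diag s : s <> 0 -> phi (s * s / 2) s = s * s / 5.
Proof.
  intros Hs. assert (0 < s * s) by nra. unfold phi. field. nra.
Qed.

Definition fK (p : pt) : R := phi (fst p) (snd p).

Definition dfK (p : pt) : pt := (0, phi_dy (fst p) (snd p)).

Lemma dfK_cont_at_axis y0 : cont_at Kset dfK (0, y0).
Proof.
  intros eps Heps. exists (eps * eps / 2). split; [nra |].
  intros [x y] _ Hd. unfold dfK; simpl. rewrite dist2_vertical, phi_dy_0l, Rminus_0_r.
  rewrite <- (Rabs_pos_eq eps) by lra. apply Rsqr_lt_abs_0. unfold Rsqr.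
  pose proof (Rabs_fst_le_dist2 (x, y) (0, y0)) as Hx. simpl in Hx. rewrite Rminus_0_r in Hx.
  pose proof (phi_dy_sqr_le x y). lra.
Qed.

Lemma dfK_cont_at_column n y0 : cont_at Kset dfK (/ 2 ^ n, y0).
Proof.
  intros eps Heps. set (t := / 2 ^ n). assert (Ht : 0 < t) by apply inv_pow2_pos.
  destruct (phi_dy_continuous t y0 ltac:(lra) eps Heps) as [alpha [Halpha Hcont]].
  exists (Rmin alpha (t / 2)). split; [apply Rmin_pos; lra |].
  intros p Kp Hd. pose proof (Rmin_l alpha (t / 2)). pose proof (Rmin_r alpha (t / 2)).
  assert (Hp : p = (t, snd p)) by (apply (Kset_near_column n p y0 Kp); fold t; lra).
  rewrite Hp in Hd |- *.
  destruct p as [x y]; simpl in *. unfold dfK; simpl. rewrite dist2_vertical.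
  rewrite dist2_vertical in Hd.
  destruct (Req_dec y y0) as [-> | Hy]; [rewrite Rminus_diag, Rabs_R0; lra |].
  apply (Hcont y). split; [split; [exact I | auto] | simpl; unfold R_dist; lra].
Qed.

Lemma fK_whitney_at_axis y0 : whitney_at Kset fK dfK (0, y0).
Proof.
  intros eps Heps. destruct (phi_small_near_axis y0 eps Heps) as [delta [Hdelta Hsmall]].
  exists delta. split; [exact Hdelta |]. intros [x y] _ Hne Hd.
  pose proof (dist2_pos _ _ Hne) as Hpos.
  pose proof (Rabs_fst_le_dist2 (x, y) (0, y0)) as Hx.
  pose proof (Rabs_snd_le_dist2 (x, y) (0, y0)) as Hy. simpl in Hx, Hy. rewrite Rminus_0_r in Hx.
  unfold fK, dfK, inner; simpl. rewrite phi_0l, phi_dy_0l.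
  set (d := dist2 (x, y) (0, y0)) in *.
  replace ((phi x y - 0 - (0 * (x - 0) + 0 * (y - y0))) / d) with (phi x y / d)
    by (field; lra).
  rewrite Rabs_pos_eq by (apply Rle_mult_inv_pos; [apply phi_nonneg | lra]).
  apply Rlt_div_l; [lra |]. apply Hsmall; lra.
Qed.

Lemma fK_whitney_at_column n y0 : whitney_at Kset fK dfK (/ 2 ^ n, y0).
Proof.
  intros eps Heps. set (t := / 2 ^ n). assert (Ht : 0 < t) by apply inv_pow2_pos.
  destruct (derivable_pt_lim_remainder _ _ _ (phi_dy_lim t y0 ltac:(lra)) eps Heps)
    as [delta [Hdelta Hrem]].
  exists (Rmin delta (t / 2)). split; [apply Rmin_pos; lra |].
  intros p Kp Hne Hd. pose proof (Rmin_l delta (t / 2)). pose proof (Rmin_r delta (t / 2)).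
  assert (Hp : p = (t, snd p)) by (apply (Kset_near_column n p y0 Kp); fold t; lra).
  rewrite Hp in Hne, Hd |- *.
  destruct p as [x y]; simpl in *. rewrite dist2_vertical in Hd |- *.
  assert (Hy : y <> y0) by (intros ->; auto).
  unfold fK, dfK, inner, vsub; simpl. rewrite Rminus_diag, Rmult_0_l, Rplus_0_l.
  apply Hrem; [exact Hy | lra].
Qed.

Lemma fK_C1 : C1_on Kset fK.
Proof.
  apply (C1_on_intro Kset fK dfK); intros [x y] [Mx _]; destruct Mx as [Hx | [n Hx]];
    simpl in Hx; subst x.
  - apply dfK_cont_at_axis.
  - apply dfK_cont_at_column.
  - apply fK_whitney_at_axis.
  - apply fK_whitney_at_column.
Qed.

Lemma fK_row_mean_slope g dxg k :
  (forall x, derivable_pt_lim (fun x => g (x, / 2 ^ k)) x (dxg x)) ->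
  (forall p, Kset p -> g p = fK p) ->
  exists c, 0 < c <= / 2 ^ k * / 2 ^ k /\ dxg c = 3 / 5.
Proof.
  intros Hder Hext. set (s := / 2 ^ k).
  assert (Hs : 0 < s) by apply inv_pow2_pos.
  assert (Hs1 : s <= 1) by apply inv_pow2_le_1.
  assert (Ht : s * s = / 2 ^ (k + k)) by (unfold s; rewrite pow_add, Rinv_mult; reflexivity).
  assert (Ht2 : s * s / 2 = / 2 ^ S (k + k))
    by (rewrite Ht; simpl; rewrite Rinv_mult; unfold Rdiv; ring).
  assert (Hss : 0 < s * s) by nra.
  assert (Hg1 : g (s * s, s) = s * s / 2).
  { rewrite Hext by (rewrite Ht; apply Kset_inv_pow2; lra).
    apply phi_sqr_diag. lra. }
  assert (Hg2 : g (s * s / 2, s) = s * s / 5).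
  { rewrite Hext by (rewrite Ht2; apply Kset_inv_pow2; lra).
    apply phi_half_sqr_diag. lra. }
  destruct (MVT_gen (fun x => g (x, s)) (s * s / 2) (s * s) dxg) as [c [Hc Hmvt]].
  - intros x _. apply is_derive_Reals, Hder.
  - intros x _. apply derivable_continuous_pt. exists (dxg x). apply Hder.
  - rewrite Rmin_left, Rmax_right in Hc by lra. simpl in Hmvt.
    rewrite Hg1, Hg2 in Hmvt. exists c. split; [lra |].
    apply (Rmult_eq_reg_r (s * s - s * s / 2)); lra.
Qed.

Lemma fK_not_C1_extendable : ~ exists g, C1_R2 g /\ forall p, Kset p -> g p = fK p.
Proof.
  intros [g [[dg [Hcont Hwhit]] Hext]].
  pose proof (C1_R2_partial_fst g dg (fun x => Hwhit x I)) as Hpartial.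
  assert (Hdx0 : fst (dg (0, 0)) = 0).
  { apply (derivable_pt_lim_0_inv_pow2 (fun x => g (x, 0))); [apply Hpartial |].
    intros n. rewrite (Hext (/ 2 ^ n, 0)) by (apply Kset_inv_pow2; lra).
    rewrite (Hext (0, 0)) by (split; simpl; [left; reflexivity | lra]).
    unfold fK; simpl. rewrite phi_0l, phi_0r. reflexivity. }
  destruct (Hcont (0, 0) I (1 / 2) ltac:(lra)) as [delta [Hdelta Hnear]].
  destruct (inv_pow2_lt (delta / 2) ltac:(lra)) as [k Hk].
  destruct (fK_row_mean_slope g (fun x => fst (dg (x, / 2 ^ k))) k (fun x => Hpartial x _) Hext)
    as [c [Hc Hslope]].
  pose proof (inv_pow2_le_1 k). pose proof (inv_pow2_pos k).
  assert (Hcd : dist2 (c, / 2 ^ k) (0, 0) < delta).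
  { eapply Rle_lt_trans; [apply dist2_le_Rabs_add |]. simpl.
    rewrite !Rminus_0_r, !Rabs_pos_eq by lra. nra. }
  specialize (Hnear (c, / 2 ^ k) I Hcd).
  pose proof (Rabs_fst_le_dist2 (dg (c, / 2 ^ k)) (dg (0, 0))) as Hfst.
  simpl in Hslope. rewrite Hslope, Hdx0, Rminus_0_r, Rabs_pos_eq in Hfst; lra.
Qed.

Theorem mainTheorem13 :
  exists f : pt -> R, C1_on Kset f /\
    ~ (exists g : pt -> R, C1_R2 g /\ forall x, Kset x -> g x = f x).
Proof. exists fK. split; [apply fK_C1 | apply fK_not_C1_extendable]. Qed.
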